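(* Let $x\cdot y$ be a PA-structure on $(\mathfrak{g},\mathfrak{n})$, where $\mathfrak{g}$ and $\mathfrak{n}$ are $2$-step nilpotent. Then the product $x\circ y=\frac12(x\cdot y+y\cdot x)$ defines a CPA-structure on $\mathfrak{g}$ if and only if $$[L(x)+R(x),\mathrm{ad}(y)]=\mathrm{ad}(x\cdot y+y\cdot x)\quad\text{for all }x,y\in V.$$ (Equivalently, $x\cdot[y,z]+[y,z]\cdot x=[y,x\cdot z]+[y,z\cdot x]-[z,x\cdot y]-[z,y\cdot x]$ for all $x,y,z\in V$.)
   Context: Let $K$ be a field of characteristic zero and $V$ a finite-dimensional vector space over $K$. Let $\mathfrak{g}=(V,[\,,])$ and $\mathfrak{n}=(V,\{\,,\})$ be two Lie algebra structures on $V$. A post-Lie algebra structure (PA-structure) on the pair $(\mathfrak{g},\mathfrak{n})$ is a $K$-bilinear product $x\cdot y$ on $V$ satisfying, for all $x,y,z\in V$: (i) $x\cdot y-y\cdot x=[x,y]-\{x,y\}$; (ii) $[x,y]\cdot z=x\cdot(y\cdot z)-y\cdot(x\cdot z)$; (iii) $x\cdot\{y,z\}=\{x\cdot y,z\}+\{y,x\cdot z\}$. Write $L(x)(y)=x\cdot y$, $R(x)(y)=y\cdot x$, $\mathrm{ad}(x)(y)=[x,y]$; brackets of operators are commutators in $\mathrm{End}(V)$. A commutative post-Lie algebra structure (CPA-structure) on a Lie algebra $(V,[\,,])$ is a bilinear product $x\circ y$ on $V$ with $x\circ y=y\circ x$, $[x,y]\circ z=x\circ(y\circ z)-y\circ(x\circ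 z)$, and $x\circ[y,z]=[x\circ y,z]+[y,x\circ z]$ for all $x,y,z$. A Lie algebra is called $2$-step nilpotent here if it is nilpotent of class at most $2$, i.e. all brackets of the form $[[x,y],z]$ vanish. *)

From HB Require Import structures.
From mathcomp Require Import all_boot all_order all_algebra.
Set Implicit Arguments. Unset Strict Implicit. Unset Printing Implicit Defensive.
Import GRing.Theory.
Local Open Scope ring_scope.

Section Defs.
Variables (K : fieldType) (V : vectType K).

Definition bilinear_op (p : V -> V -> V) : Prop :=
  (forall (a : K) (x y z : V), p (a *: x + y) z = a *: p x z + p y z) /\
  (forall (a : K) (x y z : V), p x (a *: y + z) = a *: p x y + p x z).

Definition lie_bracket (br : V -> V -> V) : Prop :=
  [/\ bilinear_op br,
      (forall x, br x x = 0) &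
      (forall x y z, br x (br y z) + br y (br z x) + br z (br x y) = 0)].

Definition two_step_nilpotent (br : V -> V -> V) : Prop :=
  forall x y z, br (br x y) z = 0.

(* PA-structure x . y on the pair (g, n) = ((V,br), (V,nbr)) *)
Definition PA_structure (br nbr dot : V -> V -> V) : Prop :=
  [/\ bilinear_op dot,
      (forall x y, dot x y - dot y x = br x y - nbr x y),
      (forall x y z, dot (br x y) z = dot x (dot y z) - dot y (dot x z)) &
      (forall x y z, dot x (nbr y z) = nbr (dot x y) z + nbr y (dot x z))].

Definition CPA_structure (br circ : V -> V -> V) : Prop :=
  [/\ bilinear_op circ,
      (forall x y, circ x y = circ y x),
      (forall x y z, circ (br x y) z = circ x (circ y z) - circ y (circ x z)) &
      (forall x y z, circ x (br y z) = br (circ x y) z + br y (circ x z))].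

Definition Lop (dot : V -> V -> V) (x : V) : V -> V := fun y => dot x y.
Definition Rop (dot : V -> V -> V) (x : V) : V -> V := fun y => dot y x.
Definition adop (br : V -> V -> V) (x : V) : V -> V := fun y => br x y.
Definition addop (f g : V -> V) : V -> V := fun v => f v + g v.
Definition opcomm (f g : V -> V) : V -> V := fun v => f (g v) - g (f v).

End Defs.

From HB Require Import structures.
From mathcomp Require Import all_boot all_order all_algebra.
From Stdlib Require Import FunctionalExtensionality.
Set Implicit Arguments. Unset Strict Implicit. Unset Printing Implicit Defensive.
Import GRing.Theory.
Local Open Scope ring_scope.

(* Write [D(x) = L(x) + R(x)], so that [x o y = D(x) y / 2], and [rho(x) = 2 L(x) + ad_n(x)];
   axiom (i) says [D(x) = rho(x) - ad(x)].  Axioms (ii), (iii) and [{{x,y},z} = 0] give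
   [[rho x, rho y] = 2 rho [x,y]].  The condition of the theorem says that every [D(x)] is a
   derivation of [g], which is the derivation axiom of [o]; with [ad x ad y = 0] it yields
   [D(x) D(y) = rho(x) rho(y) - (ad (D(x) y) + ad y D(x) + ad x D(y))], whose subtracted term is
   symmetric in [x, y] because [D(x) y = D(y) x].  Hence
   [[D x, D y] = [rho x, rho y] = 2 rho [x,y] = 2 D [x,y]], the remaining CPA axiom. *)

Definition sym (M : zmodType) (p : M -> M -> M) x y := p x y + p y x.

Lemma symC (M : zmodType) (p : M -> M -> M) x y : sym p x y = sym p y x.
Proof. exact: addrC. Qed.

Section Bilinear.
Variables (K : fieldType) (V : vectType K) (p : V -> V -> V).
Hypothesis p_bilin : bilinear_op p.

Lemma bilinDl x y z : p (x + y) z = p x z + p y z.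
Proof. by have := p_bilin.1 1 x y z; rewrite !scale1r. Qed.

Lemma bilinDr x y z : p x (y + z) = p x y + p x z.
Proof. by have := p_bilin.2 1 x y z; rewrite !scale1r. Qed.

Lemma bilin0l z : p 0 z = 0.
Proof. by apply: (@addrI _ (p 0 z)); rewrite -bilinDl !addr0. Qed.

Lemma bilin0r x : p x 0 = 0.
Proof. by apply: (@addrI _ (p x 0)); rewrite -bilinDr !addr0. Qed.

Lemma bilinZl a x z : p (a *: x) z = a *: p x z.
Proof. by have := p_bilin.1 a x 0 z; rewrite !addr0 bilin0l addr0. Qed.

Lemma bilinZr a x z : p x (a *: z) = a *: p x z.
Proof. by have := p_bilin.2 a x z 0; rewrite !addr0 bilin0r addr0. Qed.

Lemma bilinNl x z : p (- x) z = - p x z.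
Proof. by rewrite -scaleN1r bilinZl scaleN1r. Qed.

Lemma bilinNr x z : p x (- z) = - p x z.
Proof. by rewrite -scaleN1r bilinZr scaleN1r. Qed.

Lemma bilinBl x y z : p (x - y) z = p x z - p y z.
Proof. by rewrite bilinDl bilinNl. Qed.

Lemma bilinBr x y z : p x (y - z) = p x y - p x z.
Proof. by rewrite bilinDr bilinNr. Qed.

Lemma bilinMnr x z n : p x (z *+ n) = p x z *+ n.
Proof. by rewrite -scaler_nat bilinZr scaler_nat. Qed.

Lemma bilinear_sym : bilinear_op (sym p).
Proof. by split=> a x y z; rewrite /sym bilinDl bilinDr bilinZl bilinZr scalerDr addrACA. Qed.

Lemma bilinear_scale (c : K) : bilinear_op (fun x y => c *: p x y).
Proof.
by split=> a x y z; rewrite ?bilinDl ?bilinDr ?bilinZl ?bilinZr scalerDr !scalerA mulrC.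
Qed.

Lemma alternating_anticomm (p_alt : forall x, p x x = 0) x y : p y x = - p x y.
Proof.
apply/eqP; rewrite -addr_eq0; apply/eqP.
by have := p_alt (x + y); rewrite bilinDl !bilinDr !p_alt add0r addr0 addrC.
Qed.

Lemma lie_action_scale (br : V -> V -> V) (c : K) :
    (forall x y z, p (br x y) z = c *: (p x (p y z) - p y (p x z))) ->
  forall x y z, c *: p (br x y) z = c *: p x (c *: p y z) - c *: p y (c *: p x z).
Proof. by move=> p_lie x y z; rewrite !bilinZr !scalerA -scalerBr -scalerA -p_lie. Qed.

Lemma two_step_nilpotentr (p_alt : forall x, p x x = 0) (p_nil2 : two_step_nilpotent p)
  x y z : p x (p y z) = 0.
Proof. by rewrite alternating_anticomm // p_nil2 oppr0. Qed.

End Bilinear.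

Section PostLie.
Variables (K : fieldType) (V : vectType K) (br nbr dot : V -> V -> V).
Hypotheses (br_bilin : bilinear_op br) (br_alt : forall x, br x x = 0)
  (br_nil2 : two_step_nilpotent br).
Hypotheses (nbr_bilin : bilinear_op nbr) (nbr_alt : forall x, nbr x x = 0)
  (nbr_nil2 : two_step_nilpotent nbr).
Hypotheses (dot_bilin : bilinear_op dot)
  (dot_skew : forall x y, dot x y - dot y x = br x y - nbr x y)
  (dot_lie : forall x y z, dot (br x y) z = dot x (dot y z) - dot y (dot x z))
  (dot_der : forall x y z, dot x (nbr y z) = nbr (dot x y) z + nbr y (dot x z)).

Definition rho x w := dot x w *+ 2 + nbr x w.

Lemma sym_rho x w : sym dot x w = rho x w - br x w.
Proof.
rewrite /sym /rho.
have -> : dot w x = dot x w - br x w + nbr x w.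
  by rewrite -addrA (addrC (- _)) -opprB -dot_skew opprB addrC subrK.
by rewrite mulr2n -!addrA (addrC (- _)).
Qed.

Lemma rho_rho x y w :
  rho x (rho y w) = (dot x (dot y w) *+ 2 + nbr (dot x y) w) *+ 2
                    + (nbr x (dot y w) + nbr y (dot x w)) *+ 2.
Proof.
rewrite /rho (bilinDr dot_bilin) (bilinMnr dot_bilin) dot_der.
rewrite (bilinDr nbr_bilin) (bilinMnr nbr_bilin).
rewrite (two_step_nilpotentr nbr_bilin nbr_alt nbr_nil2) addr0.
rewrite (addrA (dot x _ *+ 2) (nbr _ w)) mulrnDl -addrA -mulrnDl.
by rewrite (addrC (nbr x _)).
Qed.

Lemma rho_comm x y w : rho x (rho y w) - rho y (rho x w) = rho (br x y) w *+ 2.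
Proof.
rewrite !rho_rho (addrC (nbr y (dot x w))) (addrC ((dot y _ *+ 2 + _) *+ 2)).
rewrite addrKA -mulrnBl opprD addrACA -mulrnBl -dot_lie.
by rewrite -(bilinBl nbr_bilin) dot_skew (bilinBl nbr_bilin) nbr_nil2 subr0.
Qed.

Lemma rhoBr x u v : rho x (u - v) = rho x u - rho x v.
Proof.
by rewrite /rho (bilinBr dot_bilin) (bilinBr nbr_bilin) mulrnBl [in RHS]opprD [in RHS]addrACA.
Qed.

Section SymmetricDerivation.
Hypothesis sym_der :
  forall x y z, sym dot x (br y z) = br (sym dot x y) z + br y (sym dot x z).

Lemma sym_sym x y w :
  sym dot x (sym dot y w)
  = rho x (rho y w) - (br (sym dot x y) w + br y (sym dot x w) + br x (sym dot y w)).
Proof.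
have rho_br : rho x (br y w) = br (sym dot x y) w + br y (sym dot x w).
  by rewrite -sym_der sym_rho (two_step_nilpotentr br_bilin br_alt br_nil2) subr0.
by rewrite [LHS]sym_rho [X in rho x X]sym_rho rhoBr rho_br [in RHS]opprD [in RHS]addrA.
Qed.

Lemma sym_comm x y w :
  sym dot x (sym dot y w) - sym dot y (sym dot x w) = sym dot (br x y) w *+ 2.
Proof.
rewrite !sym_sym (symC dot y x).
rewrite (addrAC (br (sym dot x y) w) (br x _)) opprB subrKA rho_comm.
by rewrite sym_rho br_nil2 subr0.
Qed.

End SymmetricDerivation.

End PostLie.

Lemma derivation_scale (K : fieldType) (V : vectType K) (br p : V -> V -> V) (c : K) :
    bilinear_op br -> c != 0 ->
  (forall x y z, c *: p x (br y z) = br (c *: p x y) z + br y (c *: p x z)) <->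
  (forall x y z, p x (br y z) = br (p x y) z + br y (p x z)).
Proof.
move=> br_bilin c_neq0; have scale_der x y z :
    (c *: p x (br y z) = br (c *: p x y) z + br y (c *: p x z)) <->
    (p x (br y z) = br (p x y) z + br y (p x z)).
  rewrite (bilinZl br_bilin) (bilinZr br_bilin) -scalerDr.
  by split=> [/(scalerI c_neq0) | ->].
by split=> der x y z; apply/scale_der.
Qed.

Lemma sym_derivation_opcomm (K : fieldType) (V : vectType K) (br dot : V -> V -> V) :
  (forall x y z, sym dot x (br y z) = br (sym dot x y) z + br y (sym dot x z)) <->
  (forall x y, opcomm (addop (Lop dot x) (Rop dot x)) (adop br y) = adop br (sym dot x y)).
Proof.
rewrite /sym /opcomm /addop /Lop /Rop /adop.
split=> der x y; last move=> z.
  by apply: functional_extensionality => z; rewrite der addrK.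
by have := congr1 (fun f => f z) (der x y) => <-; rewrite subrK.
Qed.

Theorem proposition4p3 (K : fieldType) (V : vectType K)
  (charK0 : [pchar K] =i pred0)
  (br nbr dot : V -> V -> V)
  (hg : lie_bracket br) (hn : lie_bracket nbr)
  (hg2 : two_step_nilpotent br) (hn2 : two_step_nilpotent nbr)
  (hPA : PA_structure br nbr dot) :
  CPA_structure br (fun x y => 2%:R^-1 *: (dot x y + dot y x)) <->
  (forall x y : V,
     opcomm (addop (Lop dot x) (Rop dot x)) (adop br y)
     = adop br (dot x y + dot y x)).
Proof.
have two_neq0 : (2%:R : K) != 0 by rewrite ((pcharf0P _).1 charK0).
case: hg hn hPA => br_bilin br_alt _ [nbr_bilin nbr_alt _].
case=> dot_bilin dot_skew dot_lie dot_der.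
have circ_der := derivation_scale (sym dot) br_bilin (invr_neq0 two_neq0).
split=> [[_ _ _ /circ_der/sym_derivation_opcomm] // | /sym_derivation_opcomm sym_der].
split=> [| x y | x y z | ].
- exact/bilinear_scale/bilinear_sym.
- by rewrite addrC.
- apply: (lie_action_scale (bilinear_sym dot_bilin)) => {}x {}y {}z.
  rewrite (sym_comm br_bilin br_alt hg2 nbr_bilin nbr_alt hn2 dot_bilin dot_skew dot_lie
             dot_der sym_der).
  by rewrite -scaler_nat scalerA mulVf // scale1r.
- exact/circ_der.
Qed.
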